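(* Let $R_1,R_2,S_1,S_2$ be positive semidefinite $n\times n$ matrices such that $R_1R_2=R_2R_1$ and $S_1S_2=S_2S_1$. Let $R=R_1^{1/2}R_2^{1/2}$ and $S=S_1^{1/2}S_2^{1/2}$. Then $$\lambda_1\big((R^{1/2}SR^{1/2})^2\big)\le \lambda_1\big(R_1^{1/2}S_1R_1^{1/2}\,R_2^{1/2}S_2R_2^{1/2}\big).$$
   Context: $\lambda_1(X)$ denotes the largest eigenvalue of a matrix $X$ with real nonnegative spectrum. Note $R$ and $S$ are positive semidefinite since they are products of commuting positive semidefinite matrices. *)

From HB Require Import structures.
From mathcomp Require Import all_boot all_order all_algebra.
From mathcomp Require Import boolp.
Set Implicit Arguments. Unset Strict Implicit. Unset Printing Implicit Defensive.
Import Order.TTheory GRing.Theory Num.Theory.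
Local Open Scope ring_scope.

(* Complex-like scalars: any numeric algebraically closed field C
   (e.g. algC, or complex R for an rcfType R); conjugation is Num.conj. *)

Definition adjmx (C : numClosedFieldType) m n (A : 'M[C]_(m, n)) : 'M[C]_(n, m) :=
  (map_mx Num.conj A)^T.

Definition psdmx (C : numClosedFieldType) n (A : 'M[C]_n) : Prop :=
  adjmx A = A /\ forall v : 'cV[C]_n, 0 <= (adjmx v *m A *m v) 0 0.

(* The (unique) positive semidefinite square root A^{1/2} of a PSD matrix A;
   defaults to A if no PSD square root exists (never happens for PSD A). *)
Definition sqrtmx (C : numClosedFieldType) n (A : 'M[C]_n) : 'M[C]_n :=
  match pselect (exists B : 'M[C]_n, psdmx B /\ B *m B = A) with
  | left h => proj1_sig (cid h)
  | right _ => A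
  end.

(* lambda_1(X): the largest eigenvalue of X, for X whose spectrum is real
   (an eigenvalue l such that every eigenvalue a is real and a <= l);
   defaults to 0 if no such eigenvalue exists. *)
Definition lambda1 (C : numClosedFieldType) n (X : 'M[C]_n) : C :=
  match pselect (exists l : C, eigenvalue X l /\
                   forall a : C, eigenvalue X a -> a <= l) with
  | left h => proj1_sig (cid h)
  | right _ => 0
  end.

From mathcomp Require Import all_boot all_order all_algebra.
From mathcomp Require Import boolp.
Import Order.TTheory GRing.Theory Num.Theory.
Local Open Scope ring_scope.

(* Put Y := S2^{1/2} R S1^{1/2}.  Cyclic permutations of a product preserve
   eigenvalues (nonzero ones via an eigenvector, zero ones via the determinant),
   and square roots of commuting PSD matrices commute; hence every eigenvalue of
   T := R^{1/2} S R^{1/2} is one of R S ~ Y, and the right-hand product has the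
   same eigenvalues as R S1 R S2 ~ Y Y^*.  An eigenvalue nu of Y with eigenvector
   v gives |nu|^2 |v|^2 = v Y Y^* v^* <= lambda_1(Y Y^* ) |v|^2, and since T is
   Hermitian the eigenvalues of T T are the squares nu^2 = |nu|^2. *)

Section PsdMatrices.
Set Implicit Arguments. Unset Strict Implicit. Unset Printing Implicit Defensive.
Variable C : numClosedFieldType.
Local Open Scope sesquilinear_scope.

Lemma adjmxE m n (A : 'M[C]_(m, n)) : adjmx A = A ^t*.
Proof. by rewrite /adjmx map_trmx. Qed.

Lemma adjmxK m n (A : 'M[C]_(m, n)) : adjmx (adjmx A) = A.
Proof. by rewrite !adjmxE trmxCK. Qed.

Lemma adjmxM m n p (A : 'M[C]_(m, n)) (B : 'M[C]_(n, p)) :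
  adjmx (A *m B) = adjmx B *m adjmx A.
Proof. by rewrite !adjmxE trmx_mul map_mxM. Qed.

Lemma adjmxZ m n (a : C) (A : 'M[C]_(m, n)) : adjmx (a *: A) = a^* *: adjmx A.
Proof. by apply/matrixP => i j; rewrite /adjmx !mxE rmorphM. Qed.

Lemma mulmx_adj_gt0 n (v : 'rV[C]_n) : v != 0 -> 0 < (v *m adjmx v) 0 0.
Proof. by move=> /dotmx_is_dotmx; rewrite dotmxE adjmxE. Qed.

Lemma mulmx_adj_ge0 n (v : 'rV[C]_n) : 0 <= (v *m adjmx v) 0 0.
Proof. by have [->|/mulmx_adj_gt0/ltW//] := eqVneq v 0; rewrite mul0mx mxE. Qed.

Lemma mulmx_adjE n (w : 'rV[C]_n) : (w *m adjmx w) 0 0 = \sum_j w 0 j * (w 0 j)^*.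
Proof. by rewrite !mxE; apply: eq_bigr => j _; rewrite !mxE. Qed.

Lemma mulmx_diag_adjE n (w d : 'rV[C]_n) :
  (w *m diag_mx d *m adjmx w) 0 0 = \sum_j d 0 j * (w 0 j * (w 0 j)^*).
Proof.
rewrite mul_mx_diag !mxE; apply: eq_bigr => j _.
by rewrite !mxE mulrAC mulrC.
Qed.

Lemma mulmx_diag_adj_ge0 n (w d : 'rV[C]_n) :
  (forall i, 0 <= d 0 i) -> 0 <= (w *m diag_mx d *m adjmx w) 0 0.
Proof.
move=> d_ge0; rewrite mulmx_diag_adjE sumr_ge0 // => j _.
by rewrite mulr_ge0 ?mul_conjC_ge0.
Qed.

Lemma mulmxtK n (P : 'M[C]_n) : P \is unitarymx -> P^t* *m P = 1%:M.
Proof. by move=> Pu; rewrite -[P^t*]mul1mx mulmxKtV. Qed.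

Lemma psdmxP n (A : 'M[C]_n) : psdmx A <->
  adjmx A = A /\ forall v : 'rV[C]_n, 0 <= (v *m A *m adjmx v) 0 0.
Proof. by split=> -[hA hv]; split=> // v; have := hv (adjmx v); rewrite adjmxK. Qed.

Lemma psdmx_adj n (A : 'M[C]_n) : psdmx A -> adjmx A = A.
Proof. by case. Qed.

Lemma psdmx_gram m n (Y : 'M[C]_(n, m)) : psdmx (Y *m adjmx Y).
Proof.
apply/psdmxP; split=> [|v]; first by rewrite adjmxM adjmxK.
by rewrite mulmxA -mulmxA -adjmxM mulmx_adj_ge0.
Qed.

Lemma psdmx_spectral n (A : 'M[C]_n) : psdmx A ->
  exists P : 'M[C]_n, exists d : 'rV[C]_n,
    [/\ P \is unitarymx, A = P^t* *m diag_mx d *m P & forall i, 0 <= d 0 i].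
Proof.
move=> /psdmxP [hA hv].
have /orthomx_spectralP : A \is normalmx by apply/normalmxP; rewrite -adjmxE hA.
set P := spectralmx A; set d := spectral_diag A.
have Pu : P \is unitarymx := spectral_unitarymx A.
rewrite invmx_unitary // => Ae; exists P, d; split=> // i.
have := hv (delta_mx 0 i *m P).
rewrite Ae adjmxM !mulmxA adjmxE !mulmxtVK // mulmx_diag_adjE.
rewrite (bigD1 i) //= big1 => [|j /negPf ji]; last by rewrite mxE ji mul0r mulr0.
by rewrite addr0 mxE !eqxx conjC1 !mulr1.
Qed.

Lemma mulmx_unitary_conj n (P A B : 'M[C]_n) : P \is unitarymx ->
  (P^t* *m A *m P) *m (P^t* *m B *m P) = P^t* *m (A *m B) *m P.
Proof. by move=> Pu; rewrite -!mulmxA (mulmxA P) (unitarymxP Pu) mul1mx. Qed.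

Lemma psdmx_unitary_diag n (P : 'M[C]_n) (d : 'rV[C]_n) :
  (forall i, 0 <= d 0 i) -> psdmx (P^t* *m diag_mx d *m P).
Proof.
move=> d_ge0; apply/psdmxP; split=> [|v].
  rewrite !adjmxM !adjmxE trmxCK mulmxA tr_diag_mx map_diag_mx.
  congr (_ *m diag_mx _ *m _); apply/matrixP => i j.
  by rewrite !mxE ord1; apply/conj_Creal/ger0_real.
have := mulmx_diag_adj_ge0 (v *m P^t*) d_ge0.
by rewrite adjmxM !adjmxE trmxCK !mulmxA.
Qed.

Lemma psdmx_sqrt_exists n (A : 'M[C]_n) :
  psdmx A -> exists B, psdmx B /\ B *m B = A.
Proof.
move=> /psdmx_spectral [P [d [Pu -> d_ge0]]].
pose e : 'rV[C]_n := \row_j sqrtC (d 0 j).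
have e_ge0 i : 0 <= e 0 i by rewrite mxE sqrtC_ge0.
exists (P^t* *m diag_mx e *m P); split; first exact: psdmx_unitary_diag.
rewrite mulmx_unitary_conj //; congr (_ *m _ *m _); apply/matrixP => i j.
rewrite mul_diag_mx !mxE; have [->|_] := eqVneq i j; last by rewrite !mulr0n mulr0.
by rewrite !mulr1n -expr2 sqrtCK.
Qed.

Lemma psdmx_sqrtmx n (A : 'M[C]_n) : psdmx A -> psdmx (sqrtmx A).
Proof.
move=> pA; rewrite /sqrtmx; case: pselect => [h|[]]; last exact: psdmx_sqrt_exists.
by case: (cid h) => ? [].
Qed.

Lemma sqrtmxK n (A : 'M[C]_n) : psdmx A -> sqrtmx A *m sqrtmx A = A.
Proof.
move=> pA; rewrite /sqrtmx; case: pselect => [h|[]]; last exact: psdmx_sqrt_exists.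
by case: (cid h) => ? [].
Qed.

Lemma comm_mx_diag_sqr n (Y : 'M[C]_n) (d : 'rV[C]_n) : (forall i, 0 <= d 0 i) ->
  comm_mx Y (diag_mx d *m diag_mx d) -> comm_mx Y (diag_mx d).
Proof.
move=> d_ge0 /matrixP YD2; apply/matrixP => i j; have := YD2 i j.
rewrite mulmxA -[in RHS]mulmxA !mul_mx_diag !mul_diag_mx !mxE.
have [->|Yij_neq0] := eqVneq (Y i j) 0; first by rewrite !(mul0r, mulr0).
rewrite -mulrA [RHS]mulrA [RHS]mulrC => /(mulfI Yij_neq0) d2.
suff -> : d 0 j = d 0 i by rewrite mulrC.
by apply/eqP; rewrite -(eqrXn2 (_ : 0 < 2)%N) ?d_ge0 // !expr2 d2.
Qed.

Lemma comm_mx_unitary_conj n (P Y E : 'M[C]_n) : P \is unitarymx ->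
  comm_mx (P^t* *m Y *m P) (P^t* *m E *m P) <-> comm_mx Y E.
Proof.
move=> Pu; rewrite /comm_mx !mulmx_unitary_conj //; split=> [|-> //].
move/(congr1 (fun M => P *m M *m P^t*)).
by rewrite !mulmxA (unitarymxP Pu) !mul1mx !mulmxtVK.
Qed.

Lemma comm_mx_psd_sqr n (X B : 'M[C]_n) : psdmx B ->
  comm_mx X (B *m B) -> comm_mx X B.
Proof.
move=> /psdmx_spectral [P [d [Pu -> d_ge0]]].
have -> : X = P^t* *m (P *m X *m P^t*) *m P.
  by rewrite !mulmxA (mulmxtK Pu) mul1mx -mulmxA (mulmxtK Pu) mulmx1.
rewrite mulmx_unitary_conj // !comm_mx_unitary_conj //; exact: comm_mx_diag_sqr.
Qed.

Lemma comm_mx_sqrtmx n (X A : 'M[C]_n) : psdmx A ->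
  comm_mx X A -> comm_mx X (sqrtmx A).
Proof.
by move=> pA XA; apply: comm_mx_psd_sqr (psdmx_sqrtmx pA) _; rewrite sqrtmxK.
Qed.

Lemma comm_mx_sqrtmx2 n (A B : 'M[C]_n) : psdmx A -> psdmx B ->
  comm_mx A B -> comm_mx (sqrtmx A) (sqrtmx B).
Proof.
move=> pA pB AB; apply: comm_mx_sqrtmx pB _.
exact/comm_mx_sym/comm_mx_sqrtmx/comm_mx_sym.
Qed.

Lemma psdmx_mul_comm n (A B : 'M[C]_n) : psdmx A -> psdmx B ->
  comm_mx A B -> psdmx (A *m B).
Proof.
move=> pA pB AB; have pQ := psdmx_sqrtmx pA.
have QB : comm_mx (sqrtmx A) B.
  exact/comm_mx_sym/comm_mx_sqrtmx/comm_mx_sym.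
case/psdmxP: pB => aB qB; apply/psdmxP; split.
  by rewrite adjmxM aB psdmx_adj // AB.
move=> v; rewrite -(sqrtmxK pA) -(mulmxA (sqrtmx A)) QB !mulmxA.
by have := qB (v *m sqrtmx A); rewrite adjmxM psdmx_adj // !mulmxA.
Qed.

Lemma psdmx_mul_sqrtmx n (A B : 'M[C]_n) : psdmx A -> psdmx B ->
  comm_mx A B -> psdmx (sqrtmx A *m sqrtmx B).
Proof.
move=> pA pB AB; apply: psdmx_mul_comm (comm_mx_sqrtmx2 pA pB AB).
  exact: psdmx_sqrtmx pA.
exact: psdmx_sqrtmx pB.
Qed.

Lemma eigenvalue0 n (A : 'M[C]_n) : eigenvalue A 0 = (\det A == 0).
Proof.
apply/eigenvalueP/det0P => -[v]; first by rewrite scale0r => Av0 v0; exists v.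
by move=> v0 Av0; exists v; rewrite ?scale0r.
Qed.

Lemma eigenvalue_mulC n (X Z : 'M[C]_n) a :
  eigenvalue (X *m Z) a = eigenvalue (Z *m X) a.
Proof.
wlog suff: X Z / eigenvalue (X *m Z) a -> eigenvalue (Z *m X) a.
  by move=> XZ; apply/idP/idP; apply: XZ.
have [->|a_neq0] := eqVneq a 0; first by rewrite !eigenvalue0 !det_mulmx mulrC.
move=> /eigenvalueP [v vXZ v_neq0]; apply/eigenvalueP; exists (v *m X).
  by rewrite mulmxA -(mulmxA v) vXZ scalemxAl.
apply: contraNneq v_neq0 => vX0.
have /eqP : a *: v = 0 by rewrite -vXZ mulmxA vX0 mul0mx.
by rewrite scaler_eq0 (negPf a_neq0).
Qed.

(* For mu = nu^2, (Y - nu)(Y + nu) v = 0: either v is a (-nu)-eigenvector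
   or v (Y + nu) is a nu-eigenvector. *)
Lemma eigenvalue_sqr n (Y : 'M[C]_n) mu : eigenvalue (Y *m Y) mu ->
  exists2 nu, nu ^+ 2 = mu & eigenvalue Y nu.
Proof.
move=> /eigenvalueP [v vYY v_neq0]; set nu := sqrtC mu.
have nu2 : nu ^+ 2 = mu by rewrite sqrtCK.
set w := v *m (Y + nu%:M).
have [w0|w_neq0] := eqVneq w 0.
  exists (- nu); first by rewrite sqrrN.
  apply/eigenvalueP; exists v => //; apply/eqP.
  by rewrite -subr_eq0 scaleNr opprK -mul_mx_scalar -mulmxDr -/w w0.
exists nu => //; apply/eigenvalueP; exists w => //; apply/eqP.
rewrite -subr_eq0 -mul_mx_scalar -mulmxBr /w -mulmxA mulmxDl !mulmxBr.
rewrite mul_mx_scalar mul_scalar_mx -scalar_mxM -expr2 nu2 addrA subrK.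
by rewrite mulmxBr vYY mul_mx_scalar subrr.
Qed.

Lemma eigenvalue_psdmx_ge0 n (A : 'M[C]_n) a : psdmx A -> eigenvalue A a -> 0 <= a.
Proof.
case/psdmxP => _ qA /eigenvalueP [v vA v_neq0].
by have := qA v; rewrite vA -scalemxAl mxE pmulr_lge0 ?mulmx_adj_gt0.
Qed.

Lemma eigenvalue_sqrtmx_conj n (P X : 'M[C]_n) a : psdmx P ->
  eigenvalue (sqrtmx P *m X *m sqrtmx P) a = eigenvalue (P *m X) a.
Proof. by move=> pP; rewrite eigenvalue_mulC mulmxA sqrtmxK. Qed.

Lemma eigenvalue_le_rayleigh n (M : 'M[C]_n) l a :
  (forall v : 'rV_n, (v *m M *m adjmx v) 0 0 <= l * (v *m adjmx v) 0 0) ->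
  eigenvalue M a -> a <= l.
Proof.
move=> rayleigh /eigenvalueP [v vM v_neq0]; have := rayleigh v.
by rewrite vM -scalemxAl mxE ler_pM2r ?mulmx_adj_gt0.
Qed.

Lemma psdmx_rayleigh_max n (i0 : 'I_n) (M : 'M[C]_n) : psdmx M ->
  exists2 l, eigenvalue M l &
    forall v : 'rV_n, (v *m M *m adjmx v) 0 0 <= l * (v *m adjmx v) 0 0.
Proof.
move=> /psdmx_spectral [P [d [Pu Me d_ge0]]].
have [i _ d_le] := @real_arg_maxP _ _ i0 predT (fun i => d 0 i) isT
  (fun i _ => ger0_real (d_ge0 i)).
exists (d 0 i).
  apply/eigenvalueP; exists (delta_mx 0 i *m P).
    by rewrite Me !mulmxA mulmxtVK // -[_ *m diag_mx d]rowE row_diag_mx -scalemxAl.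
  apply/eqP => /(congr1 (fun u => u *m P^t*)).
  rewrite mul0mx mulmxtVK // => /matrixP /(_ 0 i).
  by rewrite !mxE !eqxx => /eqP; rewrite oner_eq0.
move=> v; set w := v *m adjmx P.
have -> : v *m M *m adjmx v = w *m diag_mx d *m adjmx w.
  by rewrite Me /w adjmxM adjmxK -adjmxE !mulmxA.
have -> : v *m adjmx v = w *m adjmx w.
  by rewrite /w adjmxM adjmxK mulmxA -(mulmxA v) (adjmxE P) mulmxtK ?mulmx1.
rewrite mulmx_diag_adjE mulmx_adjE mulr_sumr; apply: ler_sum => j _.
by apply: ler_wpM2r; [exact: mul_conjC_ge0 | exact: d_le].
Qed.

Lemma lambda1_spec n (X : 'M[C]_n) : lambda1 X = 0 \/
  eigenvalue X (lambda1 X) /\ forall a, eigenvalue X a -> a <= lambda1 X.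
Proof. by rewrite /lambda1; case: pselect => [h|_]; [case: (cid h); right|left]. Qed.

Lemma lambda1_eq n (X : 'M[C]_n) l : eigenvalue X l ->
  (forall a, eigenvalue X a -> a <= l) -> lambda1 X = l.
Proof.
move=> Xl l_max; rewrite /lambda1; case: pselect => [h|[]]; last by exists l.
by case: (cid h) => l1 /= [Xl1 l1_max]; apply/le_anti; rewrite l_max ?l1_max.
Qed.

Lemma eq_lambda1 n (X Y : 'M[C]_n) :
  eigenvalue X =1 eigenvalue Y -> lambda1 X = lambda1 Y.
Proof. by move=> /funext XY; rewrite /lambda1 XY. Qed.

Lemma lambda1_ge0 n (X : 'M[C]_n) :
  (forall a, eigenvalue X a -> 0 <= a) -> 0 <= lambda1 X.
Proof. by move=> X_ge0; have [->|[/X_ge0]] := lambda1_spec X. Qed.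

Lemma psdmx_rayleigh n (M : 'M[C]_n) (v : 'rV_n) : psdmx M ->
  (v *m M *m adjmx v) 0 0 <= lambda1 M * (v *m adjmx v) 0 0.
Proof.
case: n M v => [|n] M v pM; first by rewrite [v]thinmx0 !mul0mx mxE mulr0.
have [l Ml rayleigh] := psdmx_rayleigh_max ord0 pM.
by rewrite (lambda1_eq Ml) // => a; apply: eigenvalue_le_rayleigh.
Qed.

Lemma eigenvalue_sqr_norm_le n (Y : 'M[C]_n) nu : eigenvalue Y nu ->
  `|nu| ^+ 2 <= lambda1 (Y *m adjmx Y).
Proof.
move=> /eigenvalueP [v vY v_neq0].
have := psdmx_rayleigh v (psdmx_gram Y).
rewrite mulmxA -(mulmxA (v *m Y)) -adjmxM vY adjmxZ -scalemxAl -scalemxAr.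
by rewrite scalerA mxE -normCK ler_pM2r ?mulmx_adj_gt0.
Qed.

Lemma lambda1_sqr_le n (T Y : 'M[C]_n) : adjmx T = T ->
  (forall a, eigenvalue T a -> eigenvalue Y a) ->
  lambda1 (T *m T) <= lambda1 (Y *m adjmx Y).
Proof.
move=> hT TY; have pTT : psdmx (T *m T) by have := psdmx_gram T; rewrite hT.
have [->|[TTl _]] := lambda1_spec (T *m T).
  by apply: lambda1_ge0 => a; apply: eigenvalue_psdmx_ge0 (psdmx_gram Y).
have [nu nu2 /TY Ynu] := eigenvalue_sqr TTl.
rewrite -(ger0_norm (eigenvalue_psdmx_ge0 pTT TTl)) -nu2 normrX.
exact: eigenvalue_sqr_norm_le.
Qed.

Lemma eigenvalue_prod_gram n (r1 r2 s1 s2 : 'M[C]_n) :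
  comm_mx r1 r2 -> adjmx (r1 *m r2) = r1 *m r2 ->
  adjmx s1 = s1 -> adjmx s2 = s2 ->
  let Y := s2 *m (r1 *m r2) *m s1 in
  eigenvalue (r1 *m (s1 *m s1) *m r1 *m (r2 *m (s2 *m s2) *m r2))
    =1 eigenvalue (Y *m adjmx Y).
Proof.
move=> r12 aR as1 as2 Y a; set R := r1 *m r2 in aR Y *.
have -> : Y *m adjmx Y = s2 *m (R *m (s1 *m s1) *m R *m s2).
  by rewrite /Y adjmxM (adjmxM s2) aR as1 as2 !mulmxA.
rewrite [RHS]eigenvalue_mulC.
have -> : r1 *m (s1 *m s1) *m r1 *m (r2 *m (s2 *m s2) *m r2) =
    r1 *m (s1 *m s1 *m R *m (s2 *m s2) *m r2) by rewrite /R !mulmxA.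
rewrite eigenvalue_mulC -mulmxA -r12 -/R eigenvalue_mulC.
by rewrite !mulmxA.
Qed.
End PsdMatrices.

Theorem lemma2 (C : numClosedFieldType) (n : nat) (R1 R2 S1 S2 : 'M[C]_n) :
  psdmx R1 -> psdmx R2 -> psdmx S1 -> psdmx S2 ->
  R1 *m R2 = R2 *m R1 -> S1 *m S2 = S2 *m S1 ->
  let R := sqrtmx R1 *m sqrtmx R2 in
  let S := sqrtmx S1 *m sqrtmx S2 in
  let T := sqrtmx R *m S *m sqrtmx R in
  lambda1 (T *m T) <=
  lambda1 ((sqrtmx R1 *m S1 *m sqrtmx R1) *m (sqrtmx R2 *m S2 *m sqrtmx R2)).
Proof.
move=> pR1 pR2 pS1 pS2 cR cS; cbv zeta.
set R := sqrtmx R1 *m sqrtmx R2; set S := sqrtmx S1 *m sqrtmx S2.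
have pR : psdmx R := psdmx_mul_sqrtmx pR1 pR2 cR.
have pS : psdmx S := psdmx_mul_sqrtmx pS1 pS2 cS.
have Y_gram := eigenvalue_prod_gram (comm_mx_sqrtmx2 pR1 pR2 cR) (psdmx_adj pR)
  (psdmx_adj (psdmx_sqrtmx pS1)) (psdmx_adj (psdmx_sqrtmx pS2)).
rewrite -(sqrtmxK pS1) -(sqrtmxK pS2) (eq_lambda1 Y_gram).
apply: lambda1_sqr_le => [|a].
  rewrite adjmxM (adjmxM (sqrtmx R)) (psdmx_adj pS).
  by rewrite (psdmx_adj (psdmx_sqrtmx pR)) mulmxA.
by rewrite eigenvalue_sqrtmx_conj // /S mulmxA eigenvalue_mulC !mulmxA.
Qed.
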